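(* Assume (A1)–(A3), let $p>0$, and let $g:[0,\infty)\to\mathbb{R}$ be a continuous function satisfying, for all $u>0$, \[ g(u)=\frac{\mu}{u^\gamma e^{-\alpha/u}}\int_0^u t^{\gamma-2}e^{-\alpha/t}\Big(p\,\bar F(t)+\int_0^t g(z)\bar F(t-z)\,dz\Big)dt. \] Then $g$ is bounded on $[0,\infty)$, i.e. $\sup_{u\ge0}|g(u)|<\infty$.
   Context: $\xi$ is a positive random variable with distribution function $F$, $\bar F=1-F$. Parameters: $\kappa\in(0,1]$, $a\in\mathbb{R}$, $r\ge0$, $\sigma>0$, $c>0$, $\lambda>0$, $\gamma=\dfrac{2((a-r)\kappa+r)}{\kappa^2\sigma^2}$, $\alpha=\dfrac{2c}{\kappa^2\sigma^2}$, $\mu=\dfrac{2\lambda}{\kappa^2\sigma^2}$. Assumptions: (A1) $F(0)=0$; (A2) there is $\varepsilon>0$ with $\mathbb{E}[\xi^\varepsilon]<\infty$; (A3) $\gamma>1$. *)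

From mathcomp Require Import all_boot all_order all_algebra.
From mathcomp Require Export all_classical all_reals all_analysis.
Set Implicit Arguments. Unset Strict Implicit. Unset Printing Implicit Defensive.
Import Order.TTheory GRing.Theory Num.Theory.
Local Open Scope classical_set_scope.
Local Open Scope ring_scope.

Definition distF (R : realType) d (T : measurableType d) (P : probability T R)
  (X : {RV P >-> R}) (x : R) : R := fine (P [set w | X w <= x]).

Definition tailF (R : realType) d (T : measurableType d) (P : probability T R)
  (X : {RV P >-> R}) (x : R) : R := 1 - distF X x.

Definition gammaP (R : realType) (kappa a r sigma : R) : R :=
  2 * ((a - r) * kappa + r) / (kappa ^+ 2 * sigma ^+ 2).
Definition alphaP (R : realType) (kappa sigma c : R) : R :=
  2 * c / (kappa ^+ 2 * sigma ^+ 2).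
Definition muP (R : realType) (kappa sigma lambda : R) : R :=
  2 * lambda / (kappa ^+ 2 * sigma ^+ 2).

From mathcomp Require Import all_boot all_order all_algebra.
From mathcomp Require Import all_classical all_reals all_analysis.
From mathcomp Require Import measurable_realfun ring lra.
Import Order.TTheory GRing.Theory Num.Theory numFieldNormedType.Exports.
Local Open Scope classical_set_scope.
Local Open Scope ring_scope.

(* Fix A such that tailF <= eta := 1/(4 mu e^al) beyond A.  If |g| <= B on
   [0, v], the convolution term at t <= v is at most B (A + eta t), and
   elementary bounds on the weight t^(gam-2) e^(-al/t) give, for v >= 1,
     |g v| <= mu e^al ((p + B A) (1/v + (1 + 1/al) / v^(gam-1)) + B eta),
   which is at most p + B/2 once v is large.  At a point x where |g| attains
   its maximum over [0, max u U], this yields |g x| <= 2 p when x lies beyond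
   the threshold U, so |g| <= max (2 p) (max_[0,U] |g|). *)

Section integral_bounds.
Context {d} {T : measurableType d} {R : realType} (mu : {measure set T -> \bar R}).
Implicit Types (D : set T) (f phi : T -> R).

(* Unlike [ge0_le_integral], no measurability is needed: both sides are
   suprema over the simple functions below the integrand. *)
Lemma le_ge0_integral D (f g : T -> \bar R) :
  (forall x, D x -> 0 <= f x)%E -> (forall x, D x -> f x <= g x)%E ->
  (\int[mu]_(x in D) f x <= \int[mu]_(x in D) g x)%E.
Proof.
move=> f0 fg.
have g0 x : D x -> (0 <= g x)%E by move=> Dx; exact: le_trans (f0 x Dx) (fg x Dx).
rewrite (ge0_integralE mu f0) (ge0_integralE mu g0).
apply: ereal_sup_le => _ [h hf <-]; exists h => // x.
apply: le_trans (hf x) _; rewrite /patch; case: ifPn => // /set_mem Dx.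
exact: fg.
Qed.

(* No integrability is required: the positive and negative parts of f are
   each dominated by phi. *)
Lemma normr_Rintegral_le D f phi (K : R) :
  (forall x, D x -> `|f x| <= phi x) ->
  (\int[mu]_(x in D) (phi x)%:E <= K%:E)%E -> `|Rintegral mu D f| <= K.
Proof.
move=> fphi iK; rewrite /Rintegral integralE.
have part (h : T -> \bar R) : (forall x, D x -> 0 <= h x <= (phi x)%:E)%E ->
    (0 <= \int[mu]_(x in D) h x <= K%:E)%E.
  move=> h0phi; apply/andP; split.
    by apply: integral_ge0 => x /h0phi /andP[].
  by apply: le_trans iK; apply: le_ge0_integral => x /h0phi /andP[].
have fphi' x : D x -> [/\ 0 <= phi x, f x <= phi x & - f x <= phi x].
  move=> /fphi fx; have := ler_norm (- f x); have := ler_norm (f x).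
  by rewrite normrN; split; lra.
have /andP[pos0 posK] :
    (0 <= \int[mu]_(x in D) (fun x => (f x)%:E)^\+ x <= K%:E)%E.
  apply: part => x /fphi'[phi0 fle _].
  by rewrite funepos_ge0 funeposE /= ge_max !lee_fin fle phi0.
have /andP[neg0 negK] :
    (0 <= \int[mu]_(x in D) (fun x => (f x)%:E)^\- x <= K%:E)%E.
  apply: part => x /fphi'[phi0 _ fle].
  by rewrite funeneg_ge0 funenegE /= ge_max !lee_fin fle phi0.
move: pos0 posK neg0 negK; case: (\int[mu]_(x in D) _)%E => [a| |] //.
case: (\int[mu]_(x in D) _)%E => [b| |] //=; rewrite !lee_fin => a0 aK b0 bK.
by rewrite ler_norml; apply/andP; split; lra.
Qed.

End integral_bounds.

Section lebesgue_itv0.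
Context {R : realType}.
Local Notation mu := (@lebesgue_measure R).

Lemma integral_itv0_cst (t k : R) : 0 <= t ->
  (\int[mu]_(x in `[0%R, t]) k%:E = (k * t)%:E)%E.
Proof.
rewrite (integral_cst mu _ k%:E) ?measurable_itv //.
have := @lebesgue_measure_itv R `[0, t]; rewrite /= => ->.
rewrite lte_fin oppr0 adde0.
case: ifPn => [_ _|]; first by rewrite EFinM.
rewrite -leNgt => t_le0 t_ge0; have -> : t = 0 by apply/eqP; rewrite eq_le t_le0.
by rewrite mulr0 mule0.
Qed.

Lemma normr_Rintegral_itv0_le (f : R -> R) (u K : R) : 0 <= u ->
  (forall t, 0 <= t <= u -> `|f t| <= K) ->
  `|Rintegral mu `[0, u] f| <= K * u.
Proof.
move=> u0 fK; apply: (@normr_Rintegral_le _ _ _ mu _ f (cst K)).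
  by move=> x /=; rewrite in_itv /= => /fK.
by rewrite integral_itv0_cst.
Qed.

Lemma normr_Rintegral_conv_le (g F : R -> R) (t B A eta : R) :
  0 <= t -> 0 <= B -> 0 <= A -> 0 <= eta ->
  (forall z, 0 <= z <= t -> `|g z| <= B) ->
  (forall s, 0 <= F s <= 1) -> (forall s, A <= s -> F s <= eta) ->
  `|Rintegral mu `[0, t] (fun z => g z * F (t - z))| <= B * (A + eta * t).
Proof.
move=> t0 B0 A0 eta0 gB F01 FA.
(* F (t - z) <= eta except for z in S, a set of measure at most A *)
pose S : set R := `[t - A, t]%classic.
have mS : measurable S := measurable_itv _.
have mD : measurable (`[0%R, t] : set R) := measurable_itv _.
have F_le z : z <= t -> F (t - z) <= eta + \1_S z.
  move=> zt; have /andP[_ F1] := F01 (t - z).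
  have [zS|zS] := boolP (z \in S); rewrite indicE.
    by rewrite zS mulr1n; lra.
  rewrite (negbTE zS) addr0; apply: FA; rewrite leNgt; apply: contra zS => tzA.
  by apply/mem_set; rewrite /S /= in_itv /=; lra.
apply: (@normr_Rintegral_le _ _ _ mu _ _ (fun z => B * (eta + \1_S z))).
  move=> z; rewrite /= in_itv /= => zt; rewrite normrM.
  have /andP[F0 _] := F01 (t - z).
  by rewrite (ger0_norm F0) ler_pM ?gB ?F_le //; case/andP: zt.
under eq_integral do rewrite EFinM EFinD.
rewrite ge0_integralZl_EFin //; last 2 first.
- by move=> x _; rewrite -EFinD lee_fin addr_ge0.
- apply/measurable_EFinP/measurable_funD; first exact: measurable_cst.
  exact: measurable_indic.
rewrite ge0_integralD //; last exact/measurable_EFinP/measurable_indic.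
rewrite integral_itv0_cst // integral_indic //.
have muS : (mu (S `&` `[0%R, t]) <= A%:E)%E.
  apply: le_trans (measureIl mu mS mD) _.
  have := @lebesgue_measure_itv R `[t - A, t]; rewrite /= => ->.
  rewrite lte_fin; case: ifPn => _; last by rewrite lee_fin.
  by rewrite -EFinD lee_fin; lra.
rewrite [X in (_ <= X)%E]EFinM; apply: lee_wpmul2l; first by rewrite lee_fin.
by rewrite EFinD addeC; apply: leeD.
Qed.

End lebesgue_itv0.

Lemma near_pinfty_ge0 {R : realType} (P : R -> Prop) :
  (\forall s \near +oo, P s) -> exists2 A, 0 <= A & forall s, A <= s -> P s.
Proof.
case=> M [_ MP]; exists (Num.max 0 (M + 1)) => [|s]; first by rewrite le_max lexx.
by rewrite ge_max => /andP[_ Ms]; apply: MP; lra.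
Qed.

Section tail.
Context {R : realType} {d : measure_display} {T : measurableType d}
  {P : probability T R} (X : {RV P >-> R}).

Lemma distFE (x : R) : distF X x = fine (cdf X x).
Proof. by []. Qed.

Lemma tailF_ge0_le1 (x : R) : 0 <= tailF X x <= 1.
Proof.
have cdf_fin : cdf X x \is a fin_num.
  by rewrite ge0_fin_numE ?cdf_ge0 // (le_lt_trans (cdf_le1 _ _)) ?ltry.
have := fine_ge0 (cdf_ge0 X x); have := @fine_le _ _ 1%E cdf_fin isT (cdf_le1 X x).
by rewrite /tailF distFE /=; lra.
Qed.

Lemma cvg_tailFy0 : tailF X s @[s --> +oo] --> 0.
Proof.
have /fine_cvgP[_ cdf1] := cvg_cdfy1 X.
by rewrite /tailF -(subrr 1); apply: cvgB; [exact: cvg_cst|exact: cdf1].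
Qed.

End tail.

Section weight.
Context {R : realType}.
Implicit Types (x r t v : R).

Lemma powR_subr1_mulr x r : 0 < x -> x `^ (r - 1) * x = x `^ r.
Proof.
move=> x0; rewrite -{2}(powRr1 (ltW x0)) -powRD ?(gt_eqF x0) ?implybT //.
by rewrite subrK.
Qed.

Lemma invr_expRN_le {a t : R} : 0 < a -> 0 < t -> t^-1 * expR (- a / t) <= a^-1.
Proof.
move=> a0 t0; rewrite mulNr expRN -invfM lef_pV2 ?posrE ?mulr_gt0 ?expR_gt0 //.
rewrite -ler_pdivrMl // mulrC.
by apply: le_trans (expR_ge1Dx _); rewrite lerDr.
Qed.

Lemma expRN_div_le1 {a t : R} : 0 < a -> 0 <= t -> expR (- a / t) <= 1.
Proof. by move=> a0 t0; rewrite expR_le1 mulNr oppr_le0 divr_ge0 // ltW. Qed.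

Context (gam al : R).

Definition weight t := t `^ (gam - 2) * expR (- al / t).

Lemma weight_ge0 t : 0 <= weight t.
Proof. by rewrite mulr_ge0 ?powR_ge0 ?expR_ge0. Qed.

(* One summand of the bound per regime: gam >= 2; t >= 1; t < 1 with gam < 2,
   where t^(gam-2) <= 1/t and e^(-al/t)/t <= 1/al. *)
Lemma weight_le t v : 1 <= gam -> 0 < al -> 0 <= t <= v -> 1 <= v ->
  weight t <= v `^ (gam - 2) + 1 + al^-1.
Proof.
move=> gam1 al0 /andP[t0 tv] v1; rewrite /weight.
have e1 := expRN_div_le1 al0 t0.
have pv := powR_ge0 v (gam - 2); have pt := powR_ge0 t (gam - 2).
have ia : 0 < al^-1 by rewrite invr_gt0.
have le_pow : t `^ (gam - 2) * expR (- al / t) <= t `^ (gam - 2) by rewrite ler_piMr.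
have [->|tpos] := eqVneq t 0.
  (* junk values: [- al / 0 = 0], and [0 `^ x] is [1] or [0] *)
  have : 0 `^ (gam - 2) <= 1 :> R by rewrite /powR eqxx; case: (_ == _).
  by rewrite invr0 mulr0 expR0 mulr1; lra.
have {}tpos : 0 < t by rewrite lt_neqAle eq_sym tpos.
have [gam2|gam2] := leP 2 gam.
  have : t `^ (gam - 2) <= v `^ (gam - 2) by rewrite ge0_ler_powR ?nnegrE //; lra.
  lra.
have [t1|t1] := leP 1 t.
  have : t `^ (gam - 2) <= t `^ 0 by apply: ler_powR => //; lra.
  by rewrite powRr0; lra.
have gam2N1 : -1 <= gam - 2 by lra.
have : t `^ (gam - 2) <= t `^ (-1) by apply: ger_powR => //; apply/andP; split; lra.
rewrite (powR_inv1 (ltW tpos)) => le_inv.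
have := invr_expRN_le al0 tpos.
have : t `^ (gam - 2) * expR (- al / t) <= t^-1 * expR (- al / t).
  by rewrite ler_wpM2r ?expR_ge0.
lra.
Qed.

Lemma weight_mulr_le t v : 1 <= gam -> 0 < al -> 0 <= t <= v ->
  weight t * t <= v `^ (gam - 1).
Proof.
move=> gam1 al0 /andP[t0 tv].
have [->|tpos] := eqVneq t 0; first by rewrite mulr0 powR_ge0.
have {}tpos : 0 < t by rewrite lt_neqAle eq_sym tpos.
have -> : weight t * t = t `^ (gam - 1) * expR (- al / t).
  rewrite /weight mulrAC -(@powR_subr1_mulr t (gam - 1) tpos).
  by congr (_ `^ _ * _ * _); ring.
apply: le_trans (_ : t `^ (gam - 1) <= _).
  by rewrite ler_piMr ?powR_ge0 ?expRN_div_le1.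
by rewrite ge0_ler_powR ?nnegrE //; lra.
Qed.

Lemma weight_affine_le t v (c0 c1 : R) :
  1 <= gam -> 0 < al -> 0 <= t <= v -> 1 <= v ->
  0 <= c0 -> 0 <= c1 ->
  weight t * (c0 + c1 * t) <= (v `^ (gam - 2) + 1 + al^-1) * c0 + c1 * v `^ (gam - 1).
Proof.
move=> gam1 al0 tv v1 c00 c10; rewrite mulrDr mulrCA; apply: lerD.
  by apply: ler_wpM2r => //; exact: weight_le.
by apply: ler_wpM2l => //; exact: weight_mulr_le.
Qed.

End weight.

Section volterra.
Context {R : realType} {F g : R -> R} {gam al m p A : R}.
Local Notation mu := (@lebesgue_measure R).
Hypotheses (gam1 : 1 < gam) (al0 : 0 < al) (m0 : 0 < m) (p0 : 0 < p) (A0 : 0 <= A).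
Hypothesis F01 : forall s, 0 <= F s <= 1.
Hypothesis g_eq : forall u, 0 < u ->
  g u = m / (u `^ gam * expR (- al / u)) *
        Rintegral mu `[0, u] (fun t => weight gam al t *
          (p * F t + Rintegral mu `[0, t] (fun z => g z * F (t - z)))).

Lemma normr_volterra_le (eta v B : R) :
  0 <= eta -> (forall s, A <= s -> F s <= eta) ->
  1 <= v -> (forall z, 0 <= z <= v -> `|g z| <= B) ->
  `|g v| <= m * expR al *
    ((p + B * A) * (v^-1 + (1 + al^-1) / v `^ (gam - 1)) + B * eta).
Proof.
move=> eta0 FA v1 gB.
have v0 : 0 < v := lt_le_trans ltr01 v1.
have B0 : 0 <= B by apply: le_trans (normr_ge0 (g 0)) (gB 0 _); rewrite lexx ltW.
have c0_ge0 : 0 <= p + B * A by rewrite addr_ge0 ?mulr_ge0 // ltW.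
have c1_ge0 : 0 <= B * eta by rewrite mulr_ge0.
set q := v `^ (gam - 1).
set W := v `^ (gam - 2) + 1 + al^-1.
have integral_le : `|Rintegral mu `[0, v] (fun t => weight gam al t *
      (p * F t + Rintegral mu `[0, t] (fun z => g z * F (t - z))))|
    <= (W * (p + B * A) + B * eta * q) * v.
  apply: normr_Rintegral_itv0_le => [|t /andP[t0 tv]]; first exact: ltW.
  have /andP[F0 F1] := F01 t.
  have gBt z : 0 <= z <= t -> `|g z| <= B.
    by case/andP=> z0 zt; rewrite gB // z0 (le_trans zt tv).
  have conv_le := normr_Rintegral_conv_le _ _ _ _ _ _ t0 B0 A0 eta0 gBt F01 FA.
  have pF : `|p * F t| <= p.
    by rewrite normrM (ger0_norm (ltW p0)) (ger0_norm F0) ler_piMr // ltW.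
  rewrite normrM ger0_norm ?weight_ge0 //.
  have tv' : 0 <= t <= v by rewrite t0.
  apply: le_trans (weight_affine_le _ _ _ _ _ _ (ltW gam1) al0 tv' v1 c0_ge0 c1_ge0).
  apply: ler_wpM2l; first exact: weight_ge0.
  by apply: le_trans (ler_normD _ _) _; lra.
have q0 : 0 < q by rewrite powR_gt0.
have W_eq : v `^ (gam - 2) = q / v.
  rewrite /q -(@powR_subr1_mulr _ v (gam - 1) v0) mulfK ?gt_eqF //.
  by congr (_ `^ _); ring.
have gam_eq : v `^ gam = q * v by rewrite /q powR_subr1_mulr.
have c_ge0 : 0 <= m / (v `^ gam * expR (- al / v)).
  by rewrite divr_ge0 ?mulr_ge0 ?powR_ge0 ?expR_ge0 // ltW.
rewrite g_eq // normrM (ger0_norm c_ge0).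
apply: le_trans (ler_wpM2l c_ge0 integral_le) _.
rewrite /W W_eq gam_eq mulNr expRN.
have -> : m / (q * v * (expR (al / v))^-1) *
    (((q / v + 1 + al^-1) * (p + B * A) + B * eta * q) * v) =
    m * expR (al / v) * ((p + B * A) * (v^-1 + (1 + al^-1) / q) + B * eta).
  by field; rewrite ?gt_eqF ?expR_gt0.
apply: ler_wpM2r.
  have ia : 0 <= al^-1 by rewrite invr_ge0 ltW.
  by rewrite addr_ge0 // mulr_ge0 // addr_ge0 ?divr_ge0 ?addr_ge0 ?invr_ge0 // ltW.
apply: ler_wpM2l; first exact: ltW.
by rewrite ler_expR ler_pdivrMr // ler_peMr // ltW.
Qed.

Lemma volterra_contraction :
  (forall s, A <= s -> F s <= (4 * m * expR al)^-1) ->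
  exists U, forall v B, U <= v -> (forall z, 0 <= z <= v -> `|g z| <= B) ->
    `|g v| <= p + B / 2.
Proof.
move=> FA; set eta := (4 * m * expR al)^-1.
have eta0 : 0 < eta by rewrite invr_gt0 !mulr_gt0 ?expR_gt0.
have ia : 0 < al^-1 by rewrite invr_gt0.
(* [lra] and [nra] only see local hypotheses, not section ones *)
have [al0' p0' A0'] := And3 al0 p0 A0.
pose L := 4 * m * expR al * (2 + al^-1) * (1 + A).
have L0 : 0 < L by rewrite !mulr_gt0 ?expR_gt0 //; lra.
exists (Num.max 1 (Num.max L (L `^ (gam - 1)^-1))) => v B.
rewrite !ge_max => /and3P[v1 Lv Lv'] gB.
have v0 : 0 < v := lt_le_trans ltr01 v1.
have B0 : 0 <= B by apply: le_trans (normr_ge0 (g 0)) (gB 0 _); rewrite lexx ltW.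
have Lq : L <= v `^ (gam - 1).
  have gam10 : 0 < gam - 1 by rewrite subr_gt0.
  have -> : L = (L `^ (gam - 1)^-1) `^ (gam - 1).
    by rewrite -powRrM mulVf ?powRr1 ?lt0r_neq0 // ltW.
  by apply: ge0_ler_powR; rewrite ?nnegrE ?powR_ge0 // ltW.
apply: le_trans (normr_volterra_le _ _ _ (ltW eta0) FA v1 gB) _.
have inv_le : v^-1 + (1 + al^-1) / v `^ (gam - 1) <= (2 + al^-1) / L.
  have -> : (2 + al^-1) / L = L^-1 + (1 + al^-1) * L^-1 by ring.
  apply: lerD; first by rewrite lef_pV2 ?posrE.
  by apply: ler_wpM2l; [lra|rewrite lef_pV2 ?posrE ?(lt_le_trans L0)].
apply: le_trans (_ : m * expR al * ((p + B * A) * ((2 + al^-1) / L) + B * eta) <= _).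
  apply: ler_wpM2l; first by rewrite mulr_ge0 ?expR_ge0 ?ltW.
  by rewrite lerD2r ler_wpM2l // addr_ge0 ?mulr_ge0 // ltW.
have -> : m * expR al * ((p + B * A) * ((2 + al^-1) / L) + B * eta) =
    (p + B * A) / (4 * (1 + A)) + B / 4.
  by rewrite /L /eta; field; rewrite !lt0r_neq0 ?expR_gt0 //; lra.
have : (p + B * A) / (4 * (1 + A)) <= p + B / 4 by rewrite ler_pdivrMr; nra.
lra.
Qed.

End volterra.

Section bounded.
Context {R : realType}.
Implicit Types (h : R -> R).

Lemma normr_max_attained h (w : R) : 0 <= w -> {within `[0, +oo[, continuous h} ->
  exists2 x, 0 <= x <= w & forall z, 0 <= z <= w -> `|h z| <= `|h x|.
Proof.
move=> w0 hc.
have hc' : {within `[0, w], continuous (fun x => `|h x|)}.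
  move=> x; apply: continuous_comp; last exact: norm_continuous.
  by apply: (continuous_subspaceW _ hc) => z /=; rewrite !in_itv /= => /andP[->].
have [x xw hx] := EVT_max w0 hc'.
by exists x => [|z zw]; rewrite -?in_itv ?hx.
Qed.

Lemma bounded_of_sup_contraction h (U c : R) : {within `[0, +oo[, continuous h} ->
  (forall v B, U <= v -> (forall z, 0 <= z <= v -> `|h z| <= B) ->
    `|h v| <= c + B / 2) ->
  exists M, forall u, 0 <= u -> `|h u| <= M.
Proof.
move=> hc contr; pose U0 := Num.max 0 U.
have U00 : 0 <= U0 by rewrite le_max lexx.
have [x0 _ hx0] := normr_max_attained _ _ U00 hc.
exists (Num.max `|h x0| (2 * c)) => u u0.
have w0 : 0 <= Num.max u U0 by rewrite le_max u0.
have [x /andP[x0' xw] hx] := normr_max_attained _ _ w0 hc.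
apply: le_trans (hx u _) _; first by rewrite u0 le_max lexx.
rewrite le_max; have [xU|Ux] := leP x U0; first by rewrite hx0 ?x0'.
have Ux' : U <= x by apply: le_trans (ltW Ux); rewrite le_max lexx orbT.
have hx' z : 0 <= z <= x -> `|h z| <= `|h x|.
  by case/andP=> z0 zx; rewrite hx // z0 (le_trans zx xw).
have := contr x `|h x| Ux' hx'.
lra.
Qed.

End bounded.

Theorem lemma2 (R : realType) (d : measure_display) (T : measurableType d)
  (P : probability T R) (X : {RV P >-> R})
  (kappa a r sigma c lambda p : R) (g : R -> R) :
  (forall w, 0 <= X w) ->
  0 < kappa -> kappa <= 1 -> 0 <= r -> 0 < sigma -> 0 < c -> 0 < lambda ->
  (* (A1) *) distF X 0 = 0 ->
  (* (A2) *) (exists2 eps : R, 0 < eps &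
               (\int[P]_w ((X w) `^ eps)%:E < +oo)%E) ->
  (* (A3) *) 1 < gammaP kappa a r sigma ->
  0 < p ->
  {within `[0, +oo[%classic, continuous g} ->
  (forall u : R, 0 < u ->
     g u = muP kappa sigma lambda /
             (u `^ (gammaP kappa a r sigma) * expR (- alphaP kappa sigma c / u)) *
           Rintegral lebesgue_measure `[0, u]%classic
             (fun t => t `^ (gammaP kappa a r sigma - 2) *
                       expR (- alphaP kappa sigma c / t) *
                       (p * tailF X t +
                        Rintegral lebesgue_measure `[0, t]%classic
                          (fun z => g z * tailF X (t - z))))) ->
  exists M : R, forall u : R, 0 <= u -> `|g u| <= M.
Proof.
move=> _ k0 _ _ s0 c0 l0 _ _ gam1 p0 g_cont g_eq.
have al0 : 0 < alphaP kappa sigma c by rewrite /alphaP divr_gt0 ?mulr_gt0.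
have m0 : 0 < muP kappa sigma lambda by rewrite /muP divr_gt0 ?mulr_gt0.
set eta := (4 * muP kappa sigma lambda * expR (alphaP kappa sigma c))^-1.
have eta0 : 0 < eta by rewrite /eta invr_gt0 mulr_gt0 ?expR_gt0 // mulr_gt0.
have [A A0 tail_le] := near_pinfty_ge0 _ (cvgr_le _ (cvg_tailFy0 X) _ eta0).
have [U contr] := volterra_contraction gam1 al0 m0 p0 A0 (tailF_ge0_le1 X) g_eq tail_le.
exact: bounded_of_sup_contraction g_cont contr.
Qed.
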